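(* Let $D$ be a square-free integer, let $\mathbb{Z}[\sqrt{D}]$ denote the ring of integers of $\mathbb{Q}(\sqrt{D})$, and let $p$ be a prime integer which is irreducible but not prime in $\mathbb{Z}[\sqrt{D}]$. Let $z\in I_p(D)$ with $\lVert z\rVert=-p^2$. Then $\gcd(z_1,z_2D)=1$, where $z_1,z_2\in\mathbb{Z}$ are such that $z=z_1+z_2\sqrt{D}$ or $z=\frac{z_1+z_2\sqrt{D}}{2}$ (with $z_1,z_2$ odd, $D\equiv 1\pmod 4$).
   Context: $\mathbb{Z}[\sqrt{D}]=\{a+b\sqrt{D}:a,b\in\mathbb{Z}\}$ if $D\equiv 2,3 \pmod 4$ and $\{\frac{a+b\sqrt{D}}{2}:a,b\in\mathbb{Z},a\equiv b \pmod 2\}$ if $D\equiv 1\pmod 4$. $\lVert z\rVert=z\bar z$ is the norm. $I_p(D)$ is the set of all non-unit $z\in\mathbb{Z}[\sqrt{D}]$ such that $z\notin\langle p\rangle$ but there exists $m\notin\langle p\rangle$ with $zm\in\langle p\rangle$. *)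

(* Elements of the ring of integers O_D of Q(sqrt D) are
   represented in "half coordinates": the pair (a, b) : Z * Z stands for
   (a + b sqrt D) / 2.  Membership in O_D is the predicate [inO D]. *)
From Stdlib Require Import ZArith Znumtheory.
Open Scope Z_scope.

Definition squarefree (D : Z) : Prop :=
  forall k : Z, (k * k | D) -> k * k = 1.

(* (a + b sqrt D)/2 lies in O_D :
   D = 1 mod 4 : a = b mod 2 ;  otherwise a, b even (element a/2 + b/2 sqrt D). *)
Definition inO (D : Z) (z : Z * Z) : Prop :=
  if Z.eqb (D mod 4) 1 then Z.even (fst z - snd z) = true
  else Z.even (fst z) = true /\ Z.even (snd z) = true.

(* product of (a + b sqrt D)/2 and (c + d sqrt D)/2 = ((ac + D bd) + (ad + bc) sqrt D)/4;
   the divisions by 2 are exact on elements of O_D. *)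
Definition mulO (D : Z) (z w : Z * Z) : Z * Z :=
  ((fst z * fst w + D * snd z * snd w) / 2, (fst z * snd w + snd z * fst w) / 2).

Definition oneO : Z * Z := (2, 0).
Definition zeroO : Z * Z := (0, 0).
Definition ofZ (n : Z) : Z * Z := (2 * n, 0).

Definition normO (D : Z) (z : Z * Z) : Z :=
  (fst z * fst z - D * snd z * snd z) / 4.

Definition unitO (D : Z) (z : Z * Z) : Prop :=
  exists w, inO D w /\ mulO D z w = oneO.

Definition divO (D : Z) (d z : Z * Z) : Prop :=
  exists w, inO D w /\ z = mulO D d w.

Definition irreducibleO (D : Z) (x : Z * Z) : Prop :=
  x <> zeroO /\ ~ unitO D x /\
  forall y w, inO D y -> inO D w -> x = mulO D y w -> unitO D y \/ unitO D w.

Definition primeO (D : Z) (x : Z * Z) : Prop :=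
  x <> zeroO /\ ~ unitO D x /\
  forall y w, inO D y -> inO D w -> divO D x (mulO D y w) -> divO D x y \/ divO D x w.

Definition I_p (D p : Z) (z : Z * Z) : Prop :=
  inO D z /\ ~ unitO D z /\ ~ divO D (ofZ p) z /\
  exists m, inO D m /\ ~ divO D (ofZ p) m /\ divO D (ofZ p) (mulO D z m).

(* the integers z1, z2 with z = z1 + z2 sqrt D, or z = (z1 + z2 sqrt D)/2 with
   z1, z2 odd (only possible when D = 1 mod 4) *)
Definition coord1 (z : Z * Z) : Z :=
  if Z.odd (fst z) then fst z else fst z / 2.
Definition coord2 (z : Z * Z) : Z :=
  if Z.odd (fst z) then snd z else snd z / 2.

(* Write z through its coordinates (x, y).  Then ||z|| = -p^2 becomes
   x^2 - D y^2 = -c p^2, with c = 1 for integral coordinates and c = 4, x odd,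
   for half-integral ones; in both cases c is coprime to x.  A prime q dividing
   both x and yD divides c p^2, hence q = p.  As p^2 does not divide the
   square-free D, p | x and p | D force p | y, so p would divide z in the ring,
   which z in I_p(D) forbids. *)
From Stdlib Require Import ZArith Znumtheory Lia.
Open Scope Z_scope.

Lemma Z_exists_prime_divisor n : 1 < n -> exists q, prime q /\ (q | n).
Proof.
  intros Hn; generalize Hn.
  apply (Z_lt_induction (fun m => 1 < m -> exists q, prime q /\ (q | m))); [| lia].
  intros m IH Hm; destruct (prime_dec m) as [Hprime | Hcomposite].
  - exists m; split; [exact Hprime | apply Z.divide_refl].
  - destruct (not_prime_divide m Hm Hcomposite) as [d [Hd Hdm]].
    destruct (IH d ltac:(lia) ltac:(lia)) as [q [Hq Hqd]].
    exists q; split; [exact Hq | exact (Z.divide_trans _ _ _ Hqd Hdm)].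
Qed.

Lemma gcd_eq_1_of_no_common_prime_divisor a b :
  (forall q, prime q -> (q | a) -> (q | b) -> False) -> Z.gcd a b = 1.
Proof.
  intros Hno.
  destruct (Z.eq_dec (Z.gcd a b) 0) as [Hg0 | Hg0].
  { apply Z.gcd_eq_0 in Hg0 as [-> ->].
    exfalso; apply (Hno 2 prime_2); apply Z.divide_0_r. }
  destruct (Z.eq_dec (Z.gcd a b) 1) as [Hg1 | Hg1]; [exact Hg1 | exfalso].
  pose proof (Z.gcd_nonneg a b) as Hg.
  destruct (Z_exists_prime_divisor (Z.gcd a b) ltac:(lia)) as [q [Hq Hqg]].
  apply (Hno q Hq).
  - exact (Z.divide_trans _ _ _ Hqg (Z.gcd_divide_l a b)).
  - exact (Z.divide_trans _ _ _ Hqg (Z.gcd_divide_r a b)).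
Qed.

Section NormForm.

Variables (D p c x y : Z).
Hypothesis Hp : prime p.
Hypothesis Hnorm : x * x - D * y * y = - (c * (p * p)).

Lemma common_prime_divisor_eq q :
  rel_prime c x -> prime q -> (q | x) -> (q | y * D) -> q = p.
Proof.
  intros [_ _ Hcx] Hq Hqx HqyD.
  assert (Hqcpp : (q | c * (p * p))).
  { replace (c * (p * p)) with (y * D * y - x * x) by lia.
    apply Z.divide_sub_r; apply Z.divide_mul_l; assumption. }
  destruct (prime_mult q Hq _ _ Hqcpp) as [Hqc | Hqpp].
  - pose proof (prime_ge_2 q Hq); pose proof (Z.divide_1_r _ (Hcx q Hqc Hqx)); lia.
  - destruct (prime_mult q Hq _ _ Hqpp) as [Hqp | Hqp];
      exact (prime_div_prime q p Hq Hp Hqp).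
Qed.

(* Writing x = p x' and D = p D', the equation becomes D' y^2 = p (x'^2 + c),
   and p does not divide D' because p^2 does not divide D. *)
Lemma prime_divides_y_of_divides_D :
  squarefree D -> (p | x) -> (p | D) -> (p | y).
Proof.
  intros Hsf [x' ->] [D' ->].
  pose proof (prime_ge_2 p Hp).
  assert (HD'yy : (p | D' * (y * y))).
  { exists (x' * x' + c); apply (Z.mul_reg_l _ _ p); [lia | nia]. }
  destruct (prime_mult p Hp _ _ HD'yy) as [[t ->] | Hpyy].
  - assert (Hpp1 : p * p = 1) by (apply Hsf; exists t; ring).
    nia.
  - destruct (prime_mult p Hp _ _ Hpyy); assumption.
Qed.

Lemma norm_form_gcd_eq_1 :
  squarefree D -> rel_prime c x -> ~ ((p | x) /\ (p | y)) ->
  Z.gcd x (y * D) = 1.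
Proof.
  intros Hsf Hcx Hpxy.
  apply gcd_eq_1_of_no_common_prime_divisor; intros q Hq Hqx HqyD.
  pose proof (common_prime_divisor_eq q Hcx Hq Hqx HqyD) as Hqp; subst q.
  apply Hpxy; split; [exact Hqx |].
  destruct (prime_mult p Hp _ _ HqyD) as [Hpy | HpD]; [exact Hpy |].
  exact (prime_divides_y_of_divides_D Hsf Hqx HpD).
Qed.

End NormForm.

Lemma normO_eq D z t :
  fst z * fst z - D * snd z * snd z = 4 * t -> normO D z = t.
Proof. intros H; unfold normO; rewrite H, Z.mul_comm; apply Z.div_mul; lia. Qed.

Lemma mulO_ofZ D n w : mulO D (ofZ n) w = (n * fst w, n * snd w).
Proof.
  unfold mulO, ofZ; cbn [fst snd]; f_equal.
  - replace (2 * n * fst w + D * 0 * snd w) with (n * fst w * 2) by ring.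
    apply Z.div_mul; lia.
  - replace (2 * n * snd w + 0 * fst w) with (n * snd w * 2) by ring.
    apply Z.div_mul; lia.
Qed.

Lemma inO_double D a b : inO D (2 * a, 2 * b).
Proof.
  unfold inO; cbn [fst snd]; rewrite <- Z.mul_sub_distr_l, !Z.even_mul.
  destruct (D mod 4 =? 1); auto.
Qed.

Lemma inO_odd D a b :
  D mod 4 = 1 -> Z.odd a = true -> Z.odd b = true -> inO D (a, b).
Proof.
  intros HD Ha Hb; unfold inO; cbn [fst snd].
  rewrite HD, Z.even_sub, <- !Z.negb_odd, Ha, Hb; reflexivity.
Qed.

Lemma inO_coords D z : inO D z ->
  (z = (coord1 z, coord2 z) /\ Z.odd (coord1 z) = true /\
   Z.odd (coord2 z) = true /\ D mod 4 = 1)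
  \/ z = (2 * coord1 z, 2 * coord2 z).
Proof.
  destruct z as [a b]; unfold inO, coord1, coord2; cbn [fst snd].
  rewrite Z.even_sub, <- !Z.negb_odd.
  destruct (Z.odd a) eqn:Ha, (Z.odd b) eqn:Hb, (D mod 4 =? 1) eqn:HD;
    cbn [negb Bool.eqb]; intros Hin;
    try discriminate; try (destruct Hin; discriminate).
  1: left; apply Z.eqb_eq in HD; auto.
  all: right; f_equal; apply Z.div_exact; try lia; rewrite Zmod_odd;
    [rewrite Ha | rewrite Hb]; reflexivity.
Qed.

Lemma norm_form_coords D z : inO D z ->
  exists c, rel_prime c (coord1 z) /\
    coord1 z * coord1 z - D * coord2 z * coord2 z = c * normO D z.
Proof.
  intros Hz; pose proof (inO_coords D z Hz) as Hcases.
  set (x := coord1 z) in *; set (y := coord2 z) in *; clearbody x y.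
  destruct Hcases as [[-> [Hx [Hy HD]]] | ->].
  - exists 4; split.
    + change 4 with (2 * 2); apply rel_prime_sym, rel_prime_mult;
        apply rel_prime_sym, prime_rel_prime; try exact prime_2;
        intros [k ->]; rewrite Z.mul_comm, Z.odd_even in Hx; discriminate.
    + apply Z.odd_spec in Hx as [k Hk], Hy as [l Hl].
      pose proof (Z_div_mod_eq_full D 4) as HD'; rewrite HD in HD'.
      set (m := D / 4) in HD'; clearbody m.
      assert (Hform : x * x - D * y * y
                      = 4 * (k * k + k - m * (2 * l + 1) * (2 * l + 1) - l * l - l))
        by (rewrite Hk, Hl, HD'; ring).
      rewrite (normO_eq D (x, y) _ Hform); exact Hform.
  - exists 1; split; [apply rel_prime_1 |].
    rewrite (normO_eq D (2 * x, 2 * y) (x * x - D * y * y)) by (cbn [fst snd]; ring).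
    ring.
Qed.

Lemma divO_ofZ_of_coords D p z :
  inO D z -> (p | coord1 z) -> (p | coord2 z) -> divO D (ofZ p) z.
Proof.
  intros Hz; pose proof (inO_coords D z Hz) as Hcases.
  set (x := coord1 z) in *; set (y := coord2 z) in *; clearbody x y.
  intros [x' ->] [y' ->].
  destruct Hcases as [[-> [Hx [Hy HD]]] | ->].
  - rewrite Z.odd_mul in Hx, Hy; apply andb_prop in Hx as [Hx _], Hy as [Hy _].
    exists (x', y'); split; [apply inO_odd; assumption |].
    rewrite mulO_ofZ; cbn [fst snd]; f_equal; ring.
  - exists (2 * x', 2 * y'); split; [apply inO_double |].
    rewrite mulO_ofZ; cbn [fst snd]; f_equal; ring.
Qed.

Theorem lemma3p4 (D p : Z) (z : Z * Z) :
  squarefree D -> D <> 1 ->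
  prime p ->
  irreducibleO D (ofZ p) -> ~ primeO D (ofZ p) ->
  I_p D p z -> normO D z = - (p * p) ->
  Z.gcd (coord1 z) (coord2 z * D) = 1.
Proof.
  intros Hsf _ Hp _ _ [Hz [_ [Hpz _]]] Hnorm.
  destruct (norm_form_coords D z Hz) as [c [Hc Hform]].
  apply (norm_form_gcd_eq_1 D p c); try assumption.
  - rewrite Hform, Hnorm; ring.
  - intros [Hpx Hpy]; exact (Hpz (divO_ofZ_of_coords D p z Hz Hpx Hpy)).
Qed.
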